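(* In the Setting, it cannot hold simultaneously that $r=\sqrt{K^2-\lambda_2V}$, $r+s=\sqrt{K-\lambda_1}$, $s=-\sqrt{K-\lambda_1}$, $g_2=0$, $g_1=f-c+1$, $f_1=c-1$ and $f_2=g-c$.
   Context: Setting: $\Gamma$ is a primitive strongly regular graph with parameters $(v,k,\lambda,\mu)$ (a $k$-regular graph on $v$ vertices, any two adjacent vertices having $\lambda$ and any two distinct non-adjacent vertices having $\mu$ common neighbours; primitive means $\Gamma$ and its complement are connected), with spectrum $k^1, r^f, s^g$ where $k>r>s$ and exponents are multiplicities. $C$ is a coclique in $\Gamma$ of size $c=\frac{vs}{s-k}$. A $K$-regular graph on $V$ vertices, neither complete nor edgeless, is a divisible design graph with parameters $(V,K,\lambda_1,\lambda_2;m,n)$ if its vertex set can be partitioned into $m$ canonical classes of size $n$ such that two distinct vertices in the same class have exactly $\lambda_1$ common neighbours and two vertices in different classes have exactly $\lambda_2$ common neighbours; it is proper unless $m=1$, $n=1$ or $\lambda_1=\lambda_2$. It is assumed that the subgraph $\Delta$ induced on $V(\Gamma)\setminus C$ is a proper divisible design graph with parameters $(V,K,\lambda_1,\lambda_2;m,n)$. Let $A$ be the adjacency matrix of $\Delta$, $W$ the space of vectors constant on each canonical class and $\mathbf{1}$ the all-ones vector. It is known that $A$ acts on $W^\perp$ with eigenvalues $\pm\sqrt{K-\lambda_1}$, whose multiplicities are denoted $f_1$ (for $+$) and $f_2$ (for $-$), with $f_1+f_2=m(n-1)$, and on $W\cap\mathbf{1}^\perp$ with eigenvalues $\pm\sqrt{K^2-\lambda_2V}$,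 with multiplicities $g_1$ (for $+$) and $g_2$ (for $-$), $g_1+g_2=m-1$. It is also known that the spectrum of $\Delta$ is $(k+s)^1, r^{f-c+1}, (r+s)^{c-1}, s^{g-c}$, with $c<g$. *)

From HB Require Import structures.
From mathcomp Require Import all_boot all_order all_algebra.
From mathcomp Require Import fingraph.
From mathcomp Require Import reals.
Set Implicit Arguments. Unset Strict Implicit. Unset Printing Implicit Defensive.
Import Order.TTheory GRing.Theory Num.Theory.
Local Open Scope ring_scope.

Section Graphs.
Variable U : finType.
Implicit Type e : rel U.

Definition simple_graph e := symmetric e /\ irreflexive e.

Definition nbhd e (x : U) : {set U} := [set y | e x y].
Definition common e (x y : U) : nat := #|[set z | e x z && e y z]|.

Definition regular e (k : nat) := forall x, #|nbhd e x| = k.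

Definition srg e (v k lam mu : nat) :=
  [/\ simple_graph e, #|U| = v, regular e k,
      (forall x y, e x y -> common e x y = lam) &
      (forall x y, x != y -> ~~ e x y -> common e x y = mu)].

Definition compl_rel e : rel U := fun x y => (x != y) && ~~ e x y.

Definition primitive e :=
  (forall x y, connect e x y) /\ (forall x y, connect (compl_rel e) x y).

Definition coclique e (C : {set U}) := forall x y, x \in C -> y \in C -> ~~ e x y.

Definition ddg e (P : {set {set U}}) (V K l1 l2 m n : nat) :=
  [/\ simple_graph e, #|U| = V, regular e K,
      (exists x y, e x y) &
      (exists x y, x != y /\ ~~ e x y) ] /\
  [/\ partition P [set: U], #|P| = m, (forall B, B \in P -> #|B| = n),
      (forall x y, x != y -> pblock P x = pblock P y -> common e x y = l1) &
      (forall x y, pblock P x != pblock P y -> common e x y = l2)].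

Definition proper_ddg e P V K l1 l2 m n :=
  ddg e P V K l1 l2 m n /\ [/\ m <> 1%N, n <> 1%N & l1 <> l2].

Definition adjmx (R : nzRingType) e : 'M[R]_#|U| :=
  \matrix_(i, j) (e (enum_val i) (enum_val j))%:R.

Definition mult (F : fieldType) (N : nat) (M : 'M[F]_N) (a : F) : nat :=
  \rank (eigenspace M a).

(* the matrix whose rows are the characteristic vectors of the blocks of P;
   its row space is W, the space of vectors constant on each class *)
Definition classmx (F : fieldType) (P : {set {set U}}) : 'M[F]_(#|P|, #|U|) :=
  \matrix_(i, j) ((enum_val j) \in (enum_val i : {set U}))%:R.

(* W^perp as a row space *)
Definition Wperp (F : fieldType) P : 'M[F]_#|U| := kermx (classmx F P)^T.
(* W ∩ 1^perp as a row space *)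
Definition W_one_perp (F : fieldType) P : 'M[F]_#|U| :=
  ((classmx F P) :&: kermx (const_mx 1 : 'cV[F]_#|U|))%MS.

Definition mult_on (F : fieldType) (N : nat) (M : 'M[F]_N) (S : 'M[F]_N) a :=
  \rank (eigenspace M a :&: S)%MS.

End Graphs.

From HB Require Import structures.
From mathcomp Require Import all_boot all_order all_algebra.
From mathcomp Require Import fingraph.
From mathcomp Require Import reals.
From mathcomp Require Import zify ring lra.
Set Implicit Arguments. Unset Strict Implicit. Unset Printing Implicit Defensive.
Import Order.TTheory GRing.Theory Num.Theory.
Local Open Scope ring_scope.

(* Write t = -s.  The hypotheses on r and s give r = 2t with t > 0.  Since r
   and s are eigenvalues of the strongly regular graph (other than k), they
   are the roots of x^2 - (lam - mu) x - (k - mu), so lam - mu = t and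
   k - mu = 2t^2; in particular t is a positive integer.  Counting the edges
   between the Hoffman coclique C and its complement, together with
   |C| (s - k) = v s, gives K = k - t and |C| k = V t.  Two distinct vertices
   of one canonical class have l1 <= lam common neighbours, so
   t^2 = K - l1 >= 2t^2 - 2t and t <= 2.  For t = 1 a non-adjacent pair
   would need lam + 2 <= k = lam + 1; for t = 2 the remaining identities
   (including the counting identity of the strongly regular graph and
   K^2 - l2 V = r^2 = 16) have no solution in natural numbers. *)

Lemma sum_enum_indicator (R : nzRingType) (T : finType) (p : pred T) :
  \sum_(j < #|T|) ((p (enum_val j) : nat)%:R : R) = #|p|%:R.
Proof.
rewrite -natr_sum; congr (_%:R).
rewrite (reindex (@enum_rank T)) /=; last by apply: onW_bij; exact: enum_rank_bij.
rewrite -sum1_card [RHS]big_mkcond /=; apply: eq_bigr => x _.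
by rewrite enum_rankK unfold_in; case: (p x).
Qed.

Lemma adjmx_row_sum (R : nzRingType) (T : finType) (e : rel T) k (i : 'I_#|T|) :
  regular e k -> \sum_j adjmx R e i j = k%:R.
Proof.
move=> e_reg; under eq_bigr do rewrite mxE.
rewrite (@sum_enum_indicator R T (e (enum_val i))) -(e_reg (enum_val i)).
by congr (_%:R); apply: eq_card => z; rewrite inE.
Qed.

Lemma adjmx_sqr_entry (R : nzRingType) (T : finType) (e : rel T) (i j : 'I_#|T|) :
  symmetric e ->
  (adjmx R e *m adjmx R e) i j = (common e (enum_val i) (enum_val j))%:R.
Proof.
move=> e_sym; rewrite mxE.
under eq_bigr do rewrite !mxE -natrM mulnb (e_sym _ (enum_val j)).
rewrite (@sum_enum_indicator R T [pred z | e (enum_val i) z && e (enum_val j) z]).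
by congr (_%:R); apply: eq_card => z; rewrite inE.
Qed.

Lemma srg_adjmx_sqr (F : fieldType) (T : finType) (e : rel T) v k lam mu :
  srg e v k lam mu ->
  adjmx F e *m adjmx F e =
    k%:R%:M + lam%:R *: adjmx F e + mu%:R *: (const_mx 1 - 1%:M - adjmx F e).
Proof.
case=> [[e_sym e_irr] _ e_reg e_lam e_mu].
apply/matrixP => i j; rewrite adjmx_sqr_entry // !mxE.
have [->|ij] := eqVneq i j.
  rewrite e_irr mulr0 addr0 subrr subr0 mulr0 addr0 mulr1n -(e_reg (enum_val j)).
  by congr (_%:R); apply: eq_card => z; rewrite !inE andbb.
have vij : enum_val i != enum_val j by apply: contra ij => /eqP/enum_val_inj ->.
rewrite mulr0n add0r subr0.
case E: (e (enum_val i) (enum_val j)).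
  by rewrite (e_lam _ _ E) mulr1 subrr mulr0 addr0.
by rewrite (e_mu _ _ vij (negbT E)) mulr0 subr0 mulr1 add0r.
Qed.

Lemma regular_adjmx_ones (F : fieldType) (T : finType) (e : rel T) k :
  regular e k -> adjmx F e *m const_mx 1 = k%:R *: (const_mx 1 : 'cV[F]_#|T|).
Proof.
move=> e_reg; apply/matrixP => i j; rewrite !mxE mulr1.
rewrite -(@adjmx_row_sum F T e k i e_reg); apply: eq_bigr => l _.
by rewrite !mxE mulr1.
Qed.

Lemma mult_eigenvector (F : fieldType) N (M : 'M[F]_N) a :
  (0 < mult M a)%N -> exists2 u : 'rV[F]_N, u != 0 & u *m M = a *: u.
Proof.
rewrite /mult lt0n mxrank_eq0 => /rowV0Pn [u Hu u0]; exists u => //.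
exact/eigenspaceP.
Qed.

Lemma mult_on_le (F : fieldType) N (M S : 'M[F]_N) a :
  (mult_on M S a <= mult M a)%N.
Proof. by apply: mxrankS; exact: capmxSl. Qed.

Section SrgMatrix.
Variables (F : fieldType) (N : nat) (M : 'M[F]_N) (k l m : F).
Let J := (const_mx 1 : 'M[F]_N).
Let ones := (const_mx 1 : 'cV[F]_N).
Hypothesis M_sqr : M *m M = k%:M + l *: M + m *: (J - 1%:M - M).
Hypothesis M_ones : M *m ones = k *: ones.

(* Any eigenvalue other than [k] is a root of x^2 - (l - m) x - (k - m):
   its eigenvectors are orthogonal to the all-ones vector, so J kills them. *)
Lemma srg_eigenvalue_root (a : F) (u : 'rV[F]_N) :
  u != 0 -> u *m M = a *: u -> a != k -> a ^+ 2 = (l - m) * a + (k - m).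
Proof.
move=> u0 u_eig ak.
have u_ones : u *m ones = 0.
  have : (a - k) *: (u *m ones) = 0.
    by rewrite scalerBl scalemxAl -u_eig -mulmxA M_ones -scalemxAr subrr.
  by move/eqP; rewrite scaler_eq0 subr_eq0 (negbTE ak) /= => /eqP.
have uJ : u *m J = 0.
  have -> : J = ones *m (const_mx 1 : 'rV[F]_N).
    by apply/matrixP => i j; rewrite !mxE big_ord1 !mxE mulr1.
  by rewrite mulmxA u_ones mul0mx.
have : (a ^+ 2 - ((l - m) * a + (k - m))) *: u = 0.
  have E1 : u *m (M *m M) = a ^+ 2 *: u.
    by rewrite mulmxA u_eig -scalemxAl u_eig scalerA expr2.
  have E2 : u *m (M *m M) = ((l - m) * a + (k - m)) *: u.
    rewrite M_sqr !mulmxDr -!scalemxAr !mulmxBr uJ mul_mx_scalar mulmx1 u_eig.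
    rewrite sub0r !scalerBr !scalerA scalerN -!scaleNr -!scalerDl; congr (_ *: _); ring.
  by rewrite scalerBl -E1 -E2 subrr.
by move/eqP; rewrite scaler_eq0 (negbTE u0) orbF subr_eq0 => /eqP.
Qed.

(* Evaluating the matrix equation on the all-ones vector (for N > 0) relates
   the degree to the number of vertices. *)
Lemma srg_degree_root (i : 'I_N) : k ^+ 2 = k + l * k + m * (N%:R - 1 - k).
Proof.
have ones0 : ones != 0.
  by apply/eqP => /matrixP /(_ i 0); rewrite !mxE => /eqP; rewrite oner_eq0.
have J_ones : J *m ones = N%:R *: ones.
  apply/matrixP => a b; rewrite !mxE (eq_bigr (fun _ => 1)); last first.
    by move=> j _; rewrite !mxE mulr1.
  by rewrite sumr_const card_ord mulr1.
have : (k ^+ 2 - (k + l * k + m * (N%:R - 1 - k))) *: ones = 0.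
  have E1 : M *m M *m ones = k ^+ 2 *: ones.
    by rewrite -mulmxA M_ones -scalemxAr M_ones scalerA expr2.
  have E2 : M *m M *m ones = (k + l * k + m * (N%:R - 1 - k)) *: ones.
    rewrite M_sqr !mulmxDl -!scalemxAl !mulmxBl J_ones !mul_scalar_mx M_ones.
    by rewrite -!scalerBl !scalerA -!scalerDl.
  by rewrite scalerBl -E1 -E2 subrr.
by move/eqP; rewrite scaler_eq0 (negbTE ones0) orbF subr_eq0 => /eqP.
Qed.
End SrgMatrix.

Lemma srg_eigenvalues_sum_prod (F : fieldType) (T : finType) (e : rel T)
    v k lam mu (r s : F) :
  srg e v k lam mu ->
  (0 < mult (adjmx F e) r)%N -> (0 < mult (adjmx F e) s)%N ->
  r != k%:R -> s != k%:R -> r != s ->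
  r + s = lam%:R - mu%:R /\ r * s = mu%:R - k%:R.
Proof.
move=> e_srg r_eig s_eig rk sk rs.
have eig_root a : (0 < mult (adjmx F e) a)%N -> a != k%:R ->
    a ^+ 2 = (lam%:R - mu%:R) * a + (k%:R - mu%:R).
  move=> /mult_eigenvector [u u0 u_eig] ak; case: (e_srg) => _ _ e_reg _ _.
  exact: (srg_eigenvalue_root (srg_adjmx_sqr F e_srg)
    (regular_adjmx_ones F e_reg) u0 u_eig ak).
have r_root := eig_root r r_eig rk; have s_root := eig_root s s_eig sk.
have sum : r + s = lam%:R - mu%:R.
  have : (r - s) * (r + s - (lam%:R - mu%:R)) = 0.
    have -> : (r - s) * (r + s - (lam%:R - mu%:R)) =
      r ^+ 2 - s ^+ 2 - (lam%:R - mu%:R) * (r - s) by ring.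
    by rewrite r_root s_root; ring.
  by move/eqP; rewrite mulf_eq0 subr_eq0 (negbTE rs) subr_eq0 => /eqP.
split=> //; apply/eqP; rewrite -subr_eq0.
have -> : r * s - (mu%:R - k%:R) = (r + s) * r + (k%:R - mu%:R) - r ^+ 2 by ring.
by rewrite sum -r_root subrr.
Qed.

(* The counting identity k (k - lam - 1) = mu (v - k - 1) of a strongly regular
   graph, written without subtraction. *)
Lemma srg_degree_identity (T : finType) (e : rel T) v k lam mu :
  srg e v k lam mu -> (0 < v)%N ->
  (k * k + mu * (1 + k) = k + lam * k + mu * v)%N.
Proof.
move=> e_srg v_pos; case: (e_srg) => _ T_v e_reg _ _.
have i : 'I_#|T| by rewrite T_v; exact: Ordinal v_pos.
have := srg_degree_root (srg_adjmx_sqr rat e_srg) (regular_adjmx_ones rat e_reg) i.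
rewrite T_v => deg.
by apply/eqP; rewrite -(eqr_nat rat) !natrD !natrM; apply/eqP; rewrite -expr2 deg; ring.
Qed.

(* If two distinct non-adjacent vertices have a common neighbour z (mu > 0),
   the neighbourhood of z contains both of them and the lam common neighbours
   of z and x, whence lam + 2 <= k. *)
Lemma srg_nonadjacent_degree (T : finType) (e : rel T) v k lam mu x y :
  srg e v k lam mu -> (0 < mu)%N -> x != y -> ~~ e x y -> (lam + 2 <= k)%N.
Proof.
case=> [[e_sym e_irr] _ e_reg e_lam e_mu] mu_pos xy nxy.
have : (0 < common e x y)%N by rewrite (e_mu _ _ xy nxy).
rewrite card_gt0 => /set0Pn [z]; rewrite inE => /andP [exz eyz].
have ezx : e z x by rewrite e_sym.
set S := [set w | e z w && e x w].
have S_card : #|S| = lam by rewrite -(e_lam _ _ ezx).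
have xS : x \notin S by rewrite inE e_irr andbF.
have yS : y \notin S by rewrite inE (negbTE nxy) andbF.
have sub : x |: (y |: S) \subset nbhd e z.
  apply/subsetP => w; rewrite !inE => /orP [/eqP ->|/orP [/eqP ->|/andP [//]]] //.
  by rewrite e_sym.
have := subset_leq_card sub.
by rewrite e_reg cardsU1 cardsU1 in_setU1 negb_or xy xS yS S_card /=; lia.
Qed.

Lemma sum_indicator (T : finType) (A : {set T}) (p : pred T) :
  (\sum_(z in A) (p z : nat))%N = #|[set z in A | p z]|.
Proof.
rewrite -sum1_card big_mkcond [RHS]big_mkcond /=; apply: eq_bigr => z _.
by rewrite !inE; case: (z \in A); case: (p z).
Qed.

Section InducedSubgraph.
Variables (T : finType) (e : rel T) (C : {set T}).
Let D := fun x y : {x : T | x \notin C} => e (val x) (val y).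

Lemma induced_nbhd_card (y : {x : T | x \notin C}) :
  #|nbhd D y| = #|[set x in ~: C | e (val y) x]|.
Proof.
rewrite -(card_imset _ val_inj); apply: eq_card => x.
apply/imsetP/idP => [[w]|].
  by rewrite !inE => w_adj ->; rewrite (valP w); exact: w_adj.
by rewrite !inE => /andP [xC x_adj]; exists (exist _ x xC); rewrite ?inE.
Qed.

Lemma induced_common_le (a b : {x : T | x \notin C}) :
  (common D a b <= common e (val a) (val b))%N.
Proof.
rewrite /common -(card_imset _ val_inj); apply: subset_leq_card.
by apply/subsetP => x /imsetP [w]; rewrite !inE => w_adj ->.
Qed.

(* Counting the edges between a coclique [C] and its complement in two ways:
   if the graph is [k]-regular and the induced subgraph on the complement is
   [K]-regular, then |C| k + |~C| K = |~C| k. *)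
Lemma coclique_edge_count k K :
  symmetric e -> regular e k -> coclique e C -> regular D K ->
  (#|C| * k + #|~: C| * K = #|~: C| * k)%N.
Proof.
move=> e_sym e_reg C_coclique D_reg.
have out_deg z : z \notin C -> #|[set x in ~: C | e z x]| = K.
  by move=> zC; rewrite -(D_reg (exist _ z zC)) induced_nbhd_card.
have from_C : (\sum_(x in C) \sum_(z in ~: C) (e x z : nat))%N = (#|C| * k)%N.
  rewrite -sum_nat_const; apply: eq_bigr => x xC.
  rewrite sum_indicator -(e_reg x); apply: eq_card => z; rewrite !inE.
  case E: (e x z); rewrite ?andbF ?andbT //.
  by apply/negP => zC; move: (C_coclique _ _ xC zC); rewrite E.
rewrite -from_C exchange_big /= -[(#|~: C| * K)%N]sum_nat_const.
rewrite -[(#|~: C| * k)%N]sum_nat_const -big_split /=.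
apply: eq_bigr => z; rewrite inE => zC.
rewrite (@sum_indicator T C (fun x => e x z)) -(out_deg z zC) -(e_reg z).
rewrite -(cardsID C (nbhd e z)); congr (_ + _)%N; apply: eq_card => x; rewrite !inE.
  by rewrite e_sym andbC.
by rewrite andbC.
Qed.

End InducedSubgraph.

Lemma proper_ddg_dims (U : finType) (e : rel U) P V K l1 l2 m n :
  proper_ddg e P V K l1 l2 m n -> (1 < m)%N /\ (1 < n)%N.
Proof.
case=> [[[_ _ _ [x0 _] _] [P_part P_m P_n _ _]] [m_ne1 n_ne1 _]].
have x0_cover : x0 \in cover P by move: P_part => /and3P [/eqP -> _ _]; rewrite inE.
have x0P : pblock P x0 \in P by exact: pblock_mem.
have m_pos : (0 < m)%N by rewrite -P_m; apply/card_gt0P; exists (pblock P x0).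
have n_pos : (0 < n)%N.
  by rewrite -(P_n _ x0P); apply/card_gt0P; exists x0; rewrite mem_pblock.
by split; lia.
Qed.

Lemma proper_ddg_lambda1 (U : finType) (e : rel U) P V K l1 l2 m n :
  proper_ddg e P V K l1 l2 m n -> exists a b, a != b /\ common e a b = l1.
Proof.
move=> e_ddg; have [_ n_gt1] := proper_ddg_dims e_ddg.
case: e_ddg => [[[_ _ _ [x0 _] _] [P_part _ P_n P_l1 _]] _].
have /and3P [/eqP P_cover P_triv _] := P_part.
have x0P : pblock P x0 \in P by apply: pblock_mem; rewrite P_cover inE.
have : (1 < #|pblock P x0|)%N by rewrite P_n.
move=> /card_gt1P [a [b [aB bB ab]]]; exists a, b; split=> //.
by apply: P_l1 => //; rewrite (def_pblock P_triv x0P aB) (def_pblock P_triv x0P bB).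
Qed.

Lemma induced_ddg_lambda1_le (T : finType) (e : rel T) (C : {set T})
    v k lam mu P V K l1 l2 m n :
  srg e v k lam mu ->
  proper_ddg (fun x y : {x : T | x \notin C} => e (val x) (val y))
    P V K l1 l2 m n ->
  (l1 <= maxn lam mu)%N.
Proof.
case=> _ _ _ e_lam e_mu /proper_ddg_lambda1 [a [b [ab <-]]].
apply: leq_trans (induced_common_le e a b) _.
case E: (e (val a) (val b)).
  by rewrite (e_lam _ _ E) leq_maxl.
by rewrite (e_mu _ _ ab (negbT E)) leq_maxr.
Qed.

Lemma pos_sqrt_sqr (R : rcfType) (x y : R) : 0 < x -> x = Num.sqrt y -> x ^+ 2 = y.
Proof.
move=> x_pos x_def; have y_pos : 0 < y by rewrite -sqrtr_gt0 -x_def.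
by rewrite x_def sqr_sqrtr // ltW.
Qed.

(* The arithmetic obstruction in the case t = 2: there k = mu + 8,
   lam = mu + 2 and K = mu + 6, the counting identities force mu (c - 2) = 8,
   and K^2 - 16 = l2 V then fails for each of the four divisors mu of 8. *)
Lemma gap_two_infeasible k lam mu K l2 V c v :
  (mu + 8 = k)%N -> (lam + 6 = k)%N -> (K + 2 = k)%N ->
  (K * K = l2 * V + 16)%N -> (c * k = 2 * V)%N -> (v = V + c)%N ->
  (k * k + mu * (1 + k) = k + lam * k + mu * v)%N -> False.
Proof.
move=> <- lam_k K_k K_sqr c_k -> deg.
have K_eq : K = (mu + 6)%N by lia.
have lam_eq : lam = (mu + 2)%N by lia.
subst K lam; clear lam_k K_k.
have mu_c : (mu * c = 2 * mu + 8)%N.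
  have : (mu * c * (mu + 10) = (2 * mu + 8) * (mu + 10))%N by nia.
  by move/eqP; rewrite eqn_pmul2r ?addn_gt0 ?orbT // => /eqP.
have mu_le8 : (mu <= 8)%N.
  have [c_le2|c_gt2] := leqP c 2.
    have : (mu * c <= mu * 2)%N by rewrite leq_mul2l c_le2 orbT.
    lia.
  have : (mu * 3 <= mu * c)%N by rewrite leq_mul2l c_gt2 orbT.
  lia.
clear deg.
do 9 (case: mu mu_le8 K_sqr c_k mu_c => [|mu] mu_le8 K_sqr c_k mu_c; first by nia).
by [].
Qed.

Section GapArgument.
(* The hypotheses of Theorem 5 that the contradiction actually uses. *)
Variables (R : realType) (T : finType) (e : rel T) (v k lam mu : nat).
Variables (r s : R) (C : {set T}) (V K l1 l2 : nat).
Let c := #|C|.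
Let t := - s.
Hypothesis srg_e : srg e v k lam mu.
Hypothesis r_eig : (0 < mult (adjmx R e) r)%N.
Hypothesis s_eig : (0 < mult (adjmx R e) s)%N.
Hypothesis r_lt_k : r < k%:R.
Hypothesis s_lt_r : s < r.
Hypothesis hoffman_C : c%:R * (s - k%:R) = v%:R * s.
Hypothesis edge_count : (c * k + V * K = V * k)%N.
Hypothesis V_pos : (0 < V)%N.
Hypothesis v_split : (c + V = v)%N.
Hypothesis l1_le : (l1 <= maxn lam mu)%N.
Hypothesis nonadjacent : exists x y : T, x != y /\ ~~ e x y.
Hypothesis r_sqrt : r = Num.sqrt (K%:R ^+ 2 - l2%:R * V%:R).
Hypothesis rs_sqrt : r + s = Num.sqrt (K%:R - l1%:R).
Hypothesis s_sqrt : s = - Num.sqrt (K%:R - l1%:R).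

Lemma gap_t_pos : 0 < t /\ r = 2 * t.
Proof. by rewrite /t; split; move: rs_sqrt s_sqrt s_lt_r; lra. Qed.

Lemma gap_t_sqr : t ^+ 2 = K%:R - l1%:R.
Proof. by apply: pos_sqrt_sqr; [case: gap_t_pos | rewrite /t s_sqrt opprK]. Qed.

Lemma gap_r_sqr : r ^+ 2 = K%:R ^+ 2 - l2%:R * V%:R.
Proof. by apply: pos_sqrt_sqr => //; case: gap_t_pos => ? ->; lra. Qed.

Lemma gap_spectral : lam%:R - mu%:R = t /\ k%:R - mu%:R = 2 * t ^+ 2.
Proof.
have [_ r_2t] := gap_t_pos.
have [||| sum prod] := srg_eigenvalues_sum_prod srg_e r_eig s_eig.
- by rewrite lt_eqF.
- by rewrite lt_eqF // (lt_trans s_lt_r).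
- by rewrite gt_eqF.
split; first by rewrite -sum r_2t /t; ring.
have -> : k%:R - mu%:R = - (r * s) :> R by rewrite prod; ring.
by rewrite r_2t /t; ring.
Qed.

(* The Hoffman coclique and the double count of its edges give the degree K
   of the induced subgraph and the relation c k = V t. *)
Lemma gap_coclique_degrees : K%:R = k%:R - t /\ c%:R * k%:R = V%:R * t.
Proof.
have v_eq : v%:R = c%:R + V%:R :> R by rewrite -natrD v_split.
have ck : c%:R * k%:R = V%:R * t by move: hoffman_C; rewrite v_eq /t; lra.
split=> //.
have edges : c%:R * k%:R + V%:R * K%:R = V%:R * k%:R :> R.
  by rewrite -!natrM -natrD edge_count.
have V_neq0 : V%:R != 0 :> R by rewrite pnatr_eq0 -lt0n.
apply: (mulfI V_neq0); rewrite mulrBr; lra.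
Qed.

Let d := (lam - mu)%N.

Lemma gap_t_nat : t = d%:R /\ (mu < lam)%N.
Proof.
have [gap _] := gap_spectral; have [t_gt0 _] := gap_t_pos.
have mu_lam : (mu < lam)%N by rewrite -(ltr_nat R); lra.
by split=> //; rewrite /d natrB ?(ltnW mu_lam) // gap.
Qed.

(* Since l1 <= lam: t^2 = K - l1 >= (k - t) - (mu + t) = 2t^2 - 2t. *)
Lemma gap_d_le2 : (d <= 2)%N.
Proof.
have [t_d mu_lam] := gap_t_nat; have [gap k_mu] := gap_spectral.
have [K_eq _] := gap_coclique_degrees.
have l1_lam : l1%:R <= lam%:R :> R.
  by rewrite ler_nat (leq_trans l1_le) // geq_max leqnn ltnW.
have [t_gt0 _] := gap_t_pos.
have : t * t <= 2 * t by move: gap_t_sqr k_mu; rewrite expr2; lra.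
by rewrite ler_pM2r // t_d => d_le; rewrite -(ler_nat R).
Qed.

(* t = 1 would give lam = k - 1 and mu = k - 2 > 0, leaving no room in a
   neighbourhood for a non-adjacent pair. *)
Lemma gap_d_ne1 : d != 1%N.
Proof.
apply/eqP => d1; have [t_d _] := gap_t_nat; have [gap k_mu] := gap_spectral.
have [_ r_2t] := gap_t_pos; rewrite d1 in t_d.
have lam_eq : (lam + 1 = k)%N.
  by apply/eqP; rewrite -(eqr_nat R) natrD; apply/eqP; move: k_mu; rewrite t_d; lra.
have mu_pos : (0 < mu)%N.
  by rewrite -(ltr_nat R); move: r_lt_k k_mu; rewrite r_2t t_d; lra.
have [x [y [xy nxy]]] := nonadjacent.
have := srg_nonadjacent_degree srg_e mu_pos xy nxy; lia.
Qed.

Lemma gap_d_ne2 : d != 2%N.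
Proof.
apply/eqP => d2; have [t_d _] := gap_t_nat; have [gap k_mu] := gap_spectral.
have [_ r_2t] := gap_t_pos; have [K_eq c_k] := gap_coclique_degrees.
rewrite d2 in t_d.
apply: (@gap_two_infeasible k lam mu K l2 V c v).
- by apply/eqP; rewrite -(eqr_nat R) natrD; apply/eqP; move: k_mu; rewrite t_d; lra.
- by apply/eqP; rewrite -(eqr_nat R) natrD; apply/eqP; move: k_mu; rewrite t_d; lra.
- by apply/eqP; rewrite -(eqr_nat R) natrD; apply/eqP; move: K_eq; rewrite t_d; lra.
- apply/eqP; rewrite -(eqr_nat R) natrD !natrM; apply/eqP.
  by move: gap_r_sqr K_eq; rewrite r_2t t_d !expr2; lra.
- by apply/eqP; rewrite -(eqr_nat R) !natrM; apply/eqP; move: c_k; rewrite t_d; lra.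
- by rewrite -v_split addnC.
- by apply: srg_degree_identity srg_e _; rewrite -v_split ltn_addl.
Qed.

Lemma gap_contradiction : False.
Proof.
have [_ mu_lam] := gap_t_nat; have := gap_d_le2; move: gap_d_ne1 gap_d_ne2.
by rewrite /d; lia.
Qed.

End GapArgument.

Theorem mainTheorem5 (R : realType) (T : finType) (e : rel T)
    (v k lam mu : nat) (r s : R) (f g : nat) (C : {set T})
    (P : {set {set {x : T | x \notin C}}})
    (V K l1 l2 m n : nat) :
  srg e v k lam mu ->
  primitive e ->
  mult (adjmx R e) k%:R = 1%N ->
  mult (adjmx R e) r = f ->
  mult (adjmx R e) s = g ->
  (1 + f + g)%N = v ->
  r < k%:R -> s < r ->
  coclique e C ->
  (#|C|%:R : R) = v%:R * s / (s - k%:R) ->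
  let Delta := fun x y : {x : T | x \notin C} => e (val x) (val y) in
  let c := #|C| in
  proper_ddg Delta P V K l1 l2 m n ->
  let A := adjmx R Delta in
  let f1 := mult_on A (Wperp R P) (Num.sqrt (K%:R - l1%:R)) in
  let f2 := mult_on A (Wperp R P) (- Num.sqrt (K%:R - l1%:R)) in
  let g1 := mult_on A (W_one_perp R P) (Num.sqrt (K%:R ^+ 2 - l2%:R * V%:R)) in
  let g2 := mult_on A (W_one_perp R P) (- Num.sqrt (K%:R ^+ 2 - l2%:R * V%:R)) in
  (* known facts recalled in the setting *)
  (f1 + f2 = m * (n - 1))%N ->
  (g1 + g2 = m - 1)%N ->
  mult A (k%:R + s) = 1%N ->
  (mult A r + c = f + 1)%N ->
  (mult A (r + s) + 1 = c)%N ->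
  (mult A s + c = g)%N ->
  (c < g)%N ->
  ~ (r = Num.sqrt (K%:R ^+ 2 - l2%:R * V%:R) /\
     r + s = Num.sqrt (K%:R - l1%:R) /\
     s = - Num.sqrt (K%:R - l1%:R) /\
     g2 = 0%N /\
     (g1%:R : R) = f%:R - c%:R + 1 /\
     (f1%:R : R) = c%:R - 1 /\
     (f2%:R : R) = g%:R - c%:R).

Proof.
move=> e_srg _ _ e_r e_s _ r_lt_k s_lt_r C_coclique C_size Delta c Delta_ddg
  A f1 f2 g1 g2 _ g12 _ A_r A_rs A_s c_lt_g [r_sqrt [rs_sqrt [s_sqrt [g2_0 _]]]].
have [m_gt1 _] := proper_ddg_dims Delta_ddg.
have c_pos : (0 < c)%N by rewrite -A_rs addn1.
(* r has multiplicity g1 = m - 1 > 0 on W ∩ 1^perp, hence f >= c > 0 *)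
have r_eig : (0 < mult (adjmx R e) r)%N.
  have g1_pos : (0 < g1)%N by move: g12; rewrite g2_0 addn0 => ->; rewrite subn_gt0.
  have := leq_trans g1_pos (mult_on_le _ _ _); rewrite -r_sqrt -/A => A_r_pos.
  by rewrite e_r; lia.
have s_eig : (0 < mult (adjmx R e) s)%N by rewrite e_s (leq_ltn_trans _ c_lt_g).
case: (e_srg) => [[e_sym _] T_v e_reg _ _].
case: (Delta_ddg) => [[[_ Delta_V Delta_reg _ [x [y [xy nxy]]]] _] _].
have compl_V : #|~: C| = V.
  by rewrite -Delta_V card_sig; apply: eq_card => z; rewrite !inE.
have v_split : (c + V = v)%N by rewrite -compl_V cardsC T_v.
have hoffman : c%:R * (s - k%:R) = v%:R * s.
  by rewrite C_size mulfVK // subr_eq0 lt_eqF // (lt_trans s_lt_r).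
have edges := coclique_edge_count e_sym e_reg C_coclique Delta_reg.
rewrite compl_V in edges.
apply: (gap_contradiction e_srg r_eig s_eig r_lt_k s_lt_r hoffman edges _ v_split
  (induced_ddg_lambda1_le e_srg Delta_ddg) _ r_sqrt rs_sqrt s_sqrt).
- by rewrite -compl_V; apply/card_gt0P; exists (val x); rewrite inE (valP x).
- by exists (val x), (val y).
Qed.
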